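(* Let $q\ge 2$, $n\ge 1$, $f:\mathbb{Z}_q^n\to\mathbb{R}$, let $M$ be the $q$-ary Möbius transform of $f$, and let $I^{SV}(i)$ be the Shapley value of feature $i\in D$ for the associated value function $v$. Then for every $i\in D$, $$I^{SV}(i)\;=\;-\sum_{\substack{\mathbf{k}\in\mathbb{Z}_q^n\\ k_i\neq 0}}\frac{1}{\|\mathbf{k}\|_0\, q^{\|\mathbf{k}\|_0}}\,M[\mathbf{k}].$$
   Context: Elements of $\mathbb{Z}_q^n$ are vectors $\mathbf{m}=(m_1,\dots,m_n)$ with $m_i\in\{0,1,\dots,q-1\}$. $D=\{1,\dots,n\}$, and for $T\subseteq D$, $\bar T=D\setminus T$. $\|\mathbf{k}\|_0$ is the number of nonzero coordinates of $\mathbf{k}$. Partial order: $\mathbf{m}\le\mathbf{k}$ iff for every $i$, $m_i=k_i$ or $m_i=0$; in that case $\mathbf{k}-\mathbf{m}$ is the coordinatewise integer difference. The $q$-ary Möbius transform of $f$ is $M[\mathbf{k}]=\sum_{\mathbf{m}\le\mathbf{k}}(-1)^{\|\mathbf{k}-\mathbf{m}\|_0} f(\mathbf{m})$. The value function (query encoded as the all-zeros vector, uniform marginalization of absent features) is $v_T=\frac{1}{q^{|\bar T|}}\sum_{\mathbf{r}\in\mathbb{Z}_q^n:\ \mathbf{r}_T=\mathbf{0}} f(\mathbf{r})$ for $T\subseteq D$. The Shapley value is $I^{SV}(i)=\sum_{T\subseteq D\setminus\{i\}}\frac{|T|!\,(n-|T|-1)!}{n!}\big[v_{T\cup\{i\}}-v_T\big]$.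 *)

From mathcomp Require Import all_boot all_order all_algebra.
Set Implicit Arguments. Unset Strict Implicit. Unset Printing Implicit Defensive.
Import Order.TTheory GRing.Theory Num.Theory.
Local Open Scope ring_scope.

Definition vecq (q n : nat) := {ffun 'I_n -> 'I_q}.

Definition nnz (q n : nat) (k : vecq q n) : nat := #|[set i | (k i : nat) != 0%N]|.

Definition vle (q n : nat) (m k : vecq q n) : bool :=
  [forall i, (m i == k i) || ((m i : nat) == 0%N)].

Definition nnz_diff (q n : nat) (k m : vecq q n) : nat :=
  #|[set i | ((k i : int) - (m i : int))%R != 0]|.

Definition mobius (R : realFieldType) (q n : nat) (f : vecq q n -> R) (k : vecq q n) : R :=
  \sum_(m : vecq q n | vle m k) (-1) ^+ (nnz_diff k m) * f m.

(* value function v_T, uniform marginalization of absent features, query = 0 *)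
Definition valfun (R : realFieldType) (q n : nat) (f : vecq q n -> R) (T : {set 'I_n}) : R :=
  (q%:R ^+ #|~: T|)^-1 *
  \sum_(r : vecq q n | [forall i in T, (r i : nat) == 0%N]) f r.

Definition shapley (R : realFieldType) (q n : nat) (f : vecq q n -> R) (i : 'I_n) : R :=
  \sum_(T : {set 'I_n} | i \notin T)
    ((#|T| `! * (n - #|T| - 1) `!)%:R / (n `!)%:R) *
    (valfun f (i |: T) - valfun f T).

From mathcomp Require Import all_boot all_order all_algebra.
From mathcomp Require Import zify ring.
Set Implicit Arguments. Unset Strict Implicit. Unset Printing Implicit Defensive.
Import Order.TTheory GRing.Theory Num.Theory.
Local Open Scope ring_scope.

(* Moebius inversion f m = \sum_(k <= m) M[k] turns the value function into
   v_T = \sum_k [supp k and T disjoint] q^-||k||_0 M[k]: averaging over the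
   coordinates outside T keeps exactly the k whose support avoids T, each
   with weight q^-||k||_0.  Hence v_(T + i) - v_T is minus the part of this
   sum over the k with i in supp k, and for such k the Shapley weights of the
   coalitions T avoiding supp k add up to 1 / ||k||_0.  All kernels involved
   factor over the coordinates, so each identity reduces to a computation on
   a single coordinate. *)

Lemma shapley_weights_recr (N s : nat) : (0 < s)%N ->
  (\sum_(t < N.+2) 'C(N.+1, t) * (t`! * (N.+1 + s - t - 1)`!) =
   (N + s).+1 * \sum_(t < N.+1) 'C(N, t) * (t`! * (N + s - t - 1)`!))%N.
Proof.
move=> s_gt0; rewrite big_ord_recl /= bin0 fact0 subn0.
under eq_bigr => t _ do rewrite /bump /= add1n binS mulnDl.
rewrite big_split /= !mul1n addnA.
have shifted : ((N.+1 + s - 1)`! +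
    \sum_(t < N.+1) 'C(N, t.+1) * ((t.+1)`! * (N.+1 + s - t.+1 - 1)`!) =
    \sum_(t < N.+1) 'C(N, t) * (t`! * (N + s - t)`!))%N.
  rewrite [RHS]big_ord_recl /= bin0 fact0 subn0 !mul1n; congr (_`! + _)%N; first lia.
  rewrite big_ord_recr /= bin_small // mul0n addn0.
  by apply: eq_bigr => t _; rewrite /bump /= add1n; congr (_ * (_ * _`!))%N; lia.
rewrite shifted -big_split big_distrr /=; apply: eq_bigr => t _.
have t_le : (t <= N)%N by rewrite -ltnS.
have -> : (N.+1 + s - t.+1 - 1 = N + s - t - 1)%N by lia.
have -> : (N + s - t = (N + s - t - 1).+1)%N by lia.
rewrite !factS; have -> : ((N + s - t - 1).+1 = N + s - t)%N by lia.
nia.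
Qed.

Lemma shapley_weights_nat (N s : nat) : (0 < s)%N ->
  (s * \sum_(t < N.+1) 'C(N, t) * (t`! * (N + s - t - 1)`!) = (N + s)`!)%N.
Proof.
move=> s_gt0; elim: N => [|N IHN].
  rewrite big_ord_recl big_ord0 bin0 fact0 !mul1n addn0 add0n subn0.
  by case: s s_gt0 => // s _; rewrite factS subn1.
by rewrite shapley_weights_recr // mulnCA IHN -factS addSn.
Qed.

Lemma sum_subsets_card (T : finType) (A : {set T}) (F : nat -> nat) :
  (\sum_(B : {set T} | B \subset A) F #|B| = \sum_(t < #|A|.+1) 'C(#|A|, t) * F t)%N.
Proof.
rewrite (partition_big (fun B : {set T} => inord #|B| : 'I_#|A|.+1) predT) //=.
apply: eq_bigr => t _.
have cardE (B : {set T}) : (B \subset A) && (inord #|B| == t) = (B \subset A) && (#|B| == t).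
  case sBA: (B \subset A) => //=.
  by rewrite -val_eqE /= inordK // ltnS subset_leq_card.
rewrite (eq_bigl _ _ cardE) (eq_bigr (fun _ => F t)); last by move=> B /andP[_ /eqP ->].
rewrite sum_nat_const -cards_draws; congr (_ * _)%N.
by apply: eq_card => B; rewrite inE.
Qed.

Lemma sum_shapley_weights_setC (R : numFieldType) (n : nat) (S : {set 'I_n}) :
  (0 < #|S|)%N ->
  \sum_(T : {set 'I_n} | T \subset ~: S)
    ((#|T|`! * (n - #|T| - 1)`!)%:R / (n`!)%:R : R) = (#|S|%:R)^-1.
Proof.
move=> S_gt0; rewrite -mulr_suml -natr_sum.
rewrite (sum_subsets_card _ (fun t => t`! * (n - t - 1)`!)%N).
have n_split : n = (#|~: S| + #|S|)%N by rewrite addnC cardsC card_ord.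
have W_eq := shapley_weights_nat #|~: S| S_gt0; rewrite -n_split in W_eq.
set W := (\sum_(t < _) _)%N in W_eq *.
have W_gt0 : (0 < W)%N by have := fact_gt0 n; rewrite -W_eq muln_gt0 => /andP[].
move/(congr1 (fun m => m%:R : R)): W_eq; rewrite natrM => <-.
by field; rewrite !pnatr_eq0 -!lt0n S_gt0 W_gt0.
Qed.

Lemma sum_delta_mull (I : finType) (R : pzSemiRingType) (g : I -> R) (z : I) :
  \sum_y (y == z)%:R * g y = g z.
Proof.
rewrite (bigD1 z) //= eqxx mul1r big1 ?addr0 // => y /negbTE ->.
by rewrite mul0r.
Qed.

Lemma prod_eq_ffun (I J : finType) (R : comPzSemiRingType) (u v : {ffun I -> J}) :
  \prod_i ((u i == v i)%:R : R) = (u == v)%:R.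
Proof.
have [->|u_ne_v] := eqVneq u v; first by rewrite big1 // => i _; rewrite eqxx.
have [i /negbTE ui] : exists i, u i != v i.
  apply/existsP; apply: contraNT u_ne_v => /existsPn u_eq_v.
  by apply/eqP/ffunP => i; apply/eqP; rewrite -[_ == _]negbK u_eq_v.
by rewrite (bigD1 i) //= ui mul0r.
Qed.

Section QaryMobius.

Variables (R : realFieldType) (q n : nat).

Local Notation vec := (vecq q.+1 n).

Lemma nat_eq0E (x : 'I_q.+1) : ((x : nat) == 0%N) = (x == ord0).
Proof. by rewrite -val_eqE. Qed.

Definition supp (k : vec) : {set 'I_n} := [set j | (k j : nat) != 0%N].

Lemma card_supp (k : vec) : #|supp k| = nnz k.
Proof. by []. Qed.

(* Zeta and Moebius kernels of the one-coordinate order: x <= y iff x = y or x = 0. *)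
Definition zeta_coord (x y : 'I_q.+1) : R := ((x == y) || (x == ord0))%:R.

Definition mobius_coord (x y : 'I_q.+1) : R :=
  if x == ord0 then (y == ord0)%:R else (y == x)%:R - (y == ord0)%:R.

Lemma zeta_mobius_coord y z :
  \sum_x zeta_coord x y * mobius_coord x z = (z == y)%:R.
Proof.
rewrite /zeta_coord; have [->|y_nz] := eqVneq y ord0.
  by under eq_bigr => x _ do rewrite orbb; rewrite sum_delta_mull /mobius_coord eqxx.
have split_or x : ((x == y) || (x == ord0))%:R = (x == y)%:R + (x == ord0)%:R :> R.
  by have [->|] := eqVneq x y; rewrite ?(negbTE y_nz) ?addr0 ?add0r.
under eq_bigr => x _ do rewrite split_or mulrDl.
by rewrite big_split /= !sum_delta_mull /mobius_coord (negbTE y_nz) eqxx; ring.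
Qed.

Lemma vle_prodE (k m : vec) : (vle k m)%:R = \prod_j zeta_coord (k j) (m j) :> R.
Proof.
have [/forallP k_le_m|/forallPn[j]] := boolP (vle k m).
  by rewrite big1 // => j _; rewrite /zeta_coord -nat_eq0E k_le_m.
by move=> /negbTE kj; rewrite (bigD1 j) //= {1}/zeta_coord -nat_eq0E kj mul0r.
Qed.

Lemma mobius_prodE (f : vec -> R) (k : vec) :
  mobius f k = \sum_(m : vec) (\prod_j mobius_coord (k j) (m j)) * f m.
Proof.
rewrite /mobius big_mkcond; apply: eq_bigr => m _.
have [/forallP m_le_k|/forallPn[j]] := ifPn; last first.
  rewrite negb_or nat_eq0E => /andP[/negbTE mk /negbTE m0].
  by rewrite (bigD1 j) //= /mobius_coord m0 mk; case: ifP; rewrite ?subrr !mul0r.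
congr (_ * _); transitivity (\prod_j ((-1) ^+ (k j != m j) : R)).
  rewrite prodrXr /nnz_diff -sum1_card big_mkcond /=; congr (_ ^+ _).
  by apply: eq_bigr => j _; rewrite inE subr_eq0 eqz_nat val_eqE; case: ifP.
apply: eq_bigr => j _; have := m_le_k j; rewrite nat_eq0E /mobius_coord.
have [->|m_ne_k /= /eqP m0] := eqVneq (m j) (k j).
  by move=> _; case: eqP; rewrite ?subr0.
by move: m_ne_k; rewrite m0 eq_sym eqxx => /negbTE ->; rewrite sub0r.
Qed.

Lemma mobius_inversion (f : vec -> R) (m : vec) :
  f m = \sum_(k | vle k m) mobius f k.
Proof.
have kernelE (k : vec) : (if vle k m then mobius f k else 0) =
    \sum_(m' : vec) (\prod_j (zeta_coord (k j) (m j) * mobius_coord (k j) (m' j))) * f m'.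
  transitivity ((vle k m)%:R * mobius f k); first by case: ifP; rewrite ?mul1r ?mul0r.
  rewrite vle_prodE mobius_prodE mulr_sumr; apply: eq_bigr => m' _.
  by rewrite mulrA -big_split.
rewrite big_mkcond (eq_bigr _ (fun k _ => kernelE k)) exchange_big /=.
under eq_bigr => m' _ do rewrite -big_distrl
  -(bigA_distr_bigA (fun j x => zeta_coord x (m j) * mobius_coord x (m' j))) /=.
under eq_bigr => m' _ do under eq_bigr => j _ do rewrite zeta_mobius_coord.
under eq_bigr => m' _ do rewrite prod_eq_ffun.
by rewrite (bigD1 m) //= eqxx mul1r big1 ?addr0 // => m' /negbTE ->; rewrite mul0r.
Qed.

Lemma zero_on_prodE (T : {set 'I_n}) (r : vec) :
  [forall j in T, (r j : nat) == 0%N]%:R = \prod_j ((j \in T) ==> (r j == ord0))%:R :> R.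
Proof.
have [/forall_inP r0|/forall_inPn[j jT]] := boolP [forall j in T, (r j : nat) == 0%N].
  by rewrite big1 // => j _; have [/r0|//] := boolP (j \in T); rewrite nat_eq0E => ->.
by rewrite nat_eq0E => /negbTE rj; rewrite (bigD1 j) //= jT rj mul0r.
Qed.

Lemma invr_expr_card_setC (T : {set 'I_n}) :
  (q.+1%:R ^+ #|~: T|)^-1 = \prod_j (if j \in T then 1 else q.+1%:R^-1) :> R.
Proof.
rewrite -exprVn -prodr_const big_mkcond /=; apply: eq_bigr => j _.
by rewrite inE; case: (j \in T).
Qed.

(* The factor by which averaging over the coordinates outside T scales the
   term of k in coordinate j. *)
Definition marginal_coord (T : {set 'I_n}) (j : 'I_n) (x : 'I_q.+1) : R :=
  if x == ord0 then 1 else if j \in T then 0 else q.+1%:R^-1.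

Lemma marginal_zeta_coord (T : {set 'I_n}) (j : 'I_n) (x : 'I_q.+1) :
  (if j \in T then 1 else q.+1%:R^-1) *
    \sum_y ((j \in T) ==> (y == ord0))%:R * zeta_coord x y = marginal_coord T j x.
Proof.
rewrite /marginal_coord /zeta_coord; case: (j \in T) => /=.
  rewrite mul1r (sum_delta_mull (fun y => ((x == y) || (x == ord0))%:R)) orbb.
  by case: (x == ord0).
under eq_bigr do rewrite mul1r.
have [->|x_nz] := eqVneq x ord0.
  by under eq_bigr do rewrite orbT; rewrite sumr_const card_ord mulVf ?pnatr_eq0.
under eq_bigr do rewrite orbF eq_sym.
by under eq_bigr do rewrite -[_%:R]mulr1; rewrite sum_delta_mull mulr1.
Qed.

Lemma prod_marginal_coord (T : {set 'I_n}) (k : vec) :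
  \prod_j marginal_coord T j (k j) = (T \subset ~: supp k)%:R / q.+1%:R ^+ nnz k.
Proof.
have [T_sub|/subsetPn[j jT]] := boolP (T \subset ~: supp k); last first.
  rewrite !inE negbK nat_eq0E => /negbTE kj.
  by rewrite mul0r (bigD1 j) //= /marginal_coord kj jT mul0r.
rewrite mul1r -exprVn -prodr_const [RHS]big_mkcond; apply: eq_bigr => j _ /=.
rewrite /marginal_coord inE nat_eq0E; have [//|kj /=] := eqVneq (k j) ord0.
suff /negbTE -> : j \notin T by [].
by apply: contra kj => /(subsetP T_sub); rewrite !inE negbK nat_eq0E.
Qed.

Lemma marginal_vle (T : {set 'I_n}) (k : vec) :
  (q.+1%:R ^+ #|~: T|)^-1 *
    \sum_(r : vec | [forall j in T, (r j : nat) == 0%N]) (vle k r)%:R =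
  (T \subset ~: supp k)%:R / q.+1%:R ^+ nnz k :> R.
Proof.
rewrite -prod_marginal_coord big_mkcond /=.
have kernelE (r : vec) : (if [forall j in T, (r j : nat) == 0%N] then (vle k r)%:R else 0) =
    \prod_j (((j \in T) ==> (r j == ord0))%:R * zeta_coord (k j) (r j)) :> R.
  rewrite big_split /= -zero_on_prodE -vle_prodE.
  by case: ifP; rewrite ?mul1r ?mul0r.
rewrite (eq_bigr _ (fun r _ => kernelE r)).
rewrite -(bigA_distr_bigA (fun j y => ((j \in T) ==> (y == ord0))%:R * zeta_coord (k j) y)).
rewrite invr_expr_card_setC -big_split /=; apply: eq_bigr => j _.
exact: marginal_zeta_coord.
Qed.

Lemma valfun_mobius (f : vec -> R) (T : {set 'I_n}) :
  valfun f T = \sum_(k : vec) (T \subset ~: supp k)%:R / q.+1%:R ^+ nnz k * mobius f k.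
Proof.
have inversionE (r : vec) : f r = \sum_(k : vec) (vle k r)%:R * mobius f k.
  rewrite {1}(mobius_inversion f r) big_mkcond; apply: eq_bigr => k _.
  by case: ifP; rewrite ?mul1r ?mul0r.
rewrite /valfun (eq_bigr _ (fun r _ => inversionE r)) exchange_big mulr_sumr.
by apply: eq_bigr => k _; rewrite -mulr_suml mulrA marginal_vle.
Qed.

Lemma valfun_setU1_sub (f : vec -> R) (T : {set 'I_n}) (i : 'I_n) :
  valfun f (i |: T) - valfun f T =
  - \sum_(k : vec | (k i : nat) != 0%N)
      (T \subset ~: supp k)%:R / q.+1%:R ^+ nnz k * mobius f k.
Proof.
rewrite !valfun_mobius -sumrB -sumrN [RHS]big_mkcond; apply: eq_bigr => k _ /=.
rewrite subUset sub1set !inE negbK.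
by case: eqP => _ /=; rewrite ?subrr // !mul0r sub0r.
Qed.

Lemma shapley_mobius (f : vec -> R) (i : 'I_n) :
  shapley f i = - \sum_(k : vec | (k i : nat) != 0%N)
      ((nnz k)%:R * q.+1%:R ^+ nnz k)^-1 * mobius f k.
Proof.
rewrite /shapley.
under eq_bigr => T _ do rewrite valfun_setU1_sub mulrN mulr_sumr.
rewrite sumrN exchange_big /=; congr (- _); apply: eq_bigr => k k_i.
under eq_bigr => T _ do rewrite !mulrA.
rewrite -!mulr_suml invfM; congr (_ * _ * _).
have i_supp : i \in supp k by rewrite inE.
have supp_gt0 : (0 < #|supp k|)%N by apply/card_gt0P; exists i.
rewrite -card_supp -(sum_shapley_weights_setC R supp_gt0).
rewrite big_mkcond [RHS]big_mkcond; apply: eq_bigr => T _ /=.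
have [T_sub|] := boolP (T \subset ~: supp k); last by case: ifP; rewrite ?mulr0.
suff -> : i \notin T by rewrite mulr1.
by apply: contraL i_supp => /(subsetP T_sub); rewrite inE.
Qed.

End QaryMobius.

Theorem theorem1 (R : realFieldType) (q n : nat) (hq : (2 <= q)%N) (hn : (1 <= n)%N)
  (f : vecq q n -> R) (i : 'I_n) :
  shapley f i =
  - \sum_(k : vecq q n | (k i : nat) != 0%N)
      ((nnz k)%:R * q%:R ^+ (nnz k))^-1 * mobius f k.
Proof.
(* The identity holds for every q >= 1 and every n; hq only rules out q = 0. *)
by case: q hq f => [//|q] _ f; exact: shapley_mobius.
Qed.
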